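(* Assume, in the setting described in the context, the saturation assumption: there is a fixed $b_0\in(0,1)$ and a number $b_h<b_0$ such that $$|J(u)-J(u_h^{(2)})| < b_h\,|J(u)-J(\tilde u)|.$$ Then the computable error estimator $\eta^{(2)}$ satisfies $$\underline{c}_h|\eta^{(2)}| \le |J(u)-J(\tilde u)| \le \overline{c}_h|\eta^{(2)}| \quad\text{and}\quad \underline{c}|\eta^{(2)}| \le |J(u)-J(\tilde u)| \le \overline{c}|\eta^{(2)}|,$$ with the positive constants $\underline{c}_h:=1/(1+b_h)$, $\overline{c}_h:=1/(1-b_h)$, $\underline{c}:=1/(1+b_0)$, $\overline{c}:=1/(1-b_0)$.
   Context: Let $U$ and $V$ be real Banach spaces with dual $V^*$. Let $\mathcal{A}:U\to V^*$ be a (nonlinear) operator that is three times continuously Fréchet differentiable, and let $J:U\to\mathbb{R}$ be three times continuously Fréchet differentiable. Notation: $\mathcal{A}(w)(v)$ is the value of $\mathcal{A}(w)\in V^*$ at $v\in V$. For fixed $v$, $\mathcal{A}'(w)(\varphi,v)$, $\mathcal{A}''(w)(\varphi,\psi,v)$ and $\mathcal{A}'''(w)(\varphi,\psi,\chi,v)$ denote the first, second and third Fréchet derivatives of $w\mapsto\mathcal{A}(w)(v)$ at $w$ in the directions $\varphi,\psi,\chi\in U$. Analogously, $J'(w)(\varphi)$ and $J'''(w)(\varphi,\psi,\chi)$ denote derivatives of $J$. Let $u\in U$ satisfy $\mathcal{A}(u)(v)=0$ for all $v\in V$, and let $z\in V$ satisfy $\mathcal{A}'(u)(\varphi,z)=J'(u)(\varphi)$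 for all $\varphi\in U$. Let $U_h^{(2)}\subset U$ and $V_h^{(2)}\subset V$ be finite-dimensional subspaces (enriched spaces). Let $u_h^{(2)}\in U_h^{(2)}$ satisfy $\mathcal{A}(u_h^{(2)})(v)=0$ for all $v\in V_h^{(2)}$. Let $z_h^{(2)}\in V_h^{(2)}$ satisfy $\mathcal{A}'(u_h^{(2)})(\varphi,z_h^{(2)})=J'(u_h^{(2)})(\varphi)$ for all $\varphi\in U_h^{(2)}$. Let $\tilde u\in U_h^{(2)}$ and $\tilde z\in V_h^{(2)}$ be arbitrary fixed elements. Define $\rho(\tilde u)(v):=-\mathcal{A}(\tilde u)(v)$ and $\rho^*(\tilde u,\tilde z)(\varphi):=J'(\tilde u)(\varphi)-\mathcal{A}'(\tilde u)(\varphi,\tilde z)$. With $e^{(2)}:=u_h^{(2)}-\tilde u$ and $e^{(2),*}:=z_h^{(2)}-\tilde z$, define $$\mathcal{R}^{(3)(2)}:=\frac12\int_0^1\Big[J'''(\tilde u+se^{(2)})(e^{(2)},e^{(2)},e^{(2)})-\mathcal{A}'''(\tilde u+se^{(2)})(e^{(2)},e^{(2)},e^{(2)},\tilde z+se^{(2),*})-3\mathcal{A}''(\tilde u+se^{(2)})(e^{(2)},e^{(2)},e^{(2),*})\Big]s(s-1)\,ds,$$ and the computable error estimator $$\eta^{(2)}:=\tfrac12\rho(\tilde u)(z_h^{(2)}-\tilde z)+\tfrac12\rho^*(\tilde u,\tilde z)(u_h^{(2)}-\tilde u)+\rho(\tilde u)(\tilde z)+\mathcal{R}^{(3)(2)}.$$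 *)

From HB Require Import structures.
From mathcomp Require Import all_boot all_order all_algebra.
From mathcomp Require Import all_classical all_reals all_analysis.
Set Implicit Arguments. Unset Strict Implicit. Unset Printing Implicit Defensive.
Import Order.TTheory GRing.Theory Num.Theory.
Import numFieldNormedType.Exports.
Local Open Scope classical_set_scope.
Local Open Scope ring_scope.

Definition fin_subspace {R : realType} {X : normedModType R} (S : set X) : Prop :=
  exists s : seq X,
    S = [set x | exists c : 'I_(size s) -> R, x = \sum_(i < size s) c i *: s`_i].

Section Forms.
Context {R : realType} {U V : normedModType R}.

Definition blin1 (f : U -> R) : Prop :=
  (forall a x y, f (a *: x + y) = a * f x + f y) /\
  exists C : R, forall x, `|f x| <= C * `|x|.

Definition blin2 (f : U -> U -> R) : Prop :=
  (forall a x y p, f (a *: x + y) p = a * f x p + f y p) /\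
  (forall a x y p, f p (a *: x + y) = a * f p x + f p y) /\
  exists C : R, forall x y, `|f x y| <= C * `|x| * `|y|.

Definition blin3 (f : U -> U -> U -> R) : Prop :=
  (forall a x y p q, f (a *: x + y) p q = a * f x p q + f y p q) /\
  (forall a x y p q, f p (a *: x + y) q = a * f p x q + f p y q) /\
  (forall a x y p q, f p q (a *: x + y) = a * f p q x + f p q y) /\
  exists C : R, forall x y z, `|f x y z| <= C * `|x| * `|y| * `|z|.

(* forms with a last argument in V, linear in it: elements of V^*,
   L(U, V^* ), L(U, L(U, V^* )), ... *)
Definition blinV0 (f : V -> R) : Prop :=
  (forall a x y, f (a *: x + y) = a * f x + f y) /\
  exists C : R, forall v, `|f v| <= C * `|v|.

Definition blinV1 (f : U -> V -> R) : Prop :=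
  (forall a x y v, f (a *: x + y) v = a * f x v + f y v) /\
  (forall a x y p, f p (a *: x + y) = a * f p x + f p y) /\
  exists C : R, forall x v, `|f x v| <= C * `|x| * `|v|.

Definition blinV2 (f : U -> U -> V -> R) : Prop :=
  (forall a x y p v, f (a *: x + y) p v = a * f x p v + f y p v) /\
  (forall a x y p v, f p (a *: x + y) v = a * f p x v + f p y v) /\
  (forall a x y p q, f p q (a *: x + y) = a * f p q x + f p q y) /\
  exists C : R, forall x y v, `|f x y v| <= C * `|x| * `|y| * `|v|.

Definition blinV3 (f : U -> U -> U -> V -> R) : Prop :=
  (forall a x y p q v, f (a *: x + y) p q v = a * f x p q v + f y p q v) /\
  (forall a x y p q v, f p (a *: x + y) q v = a * f p x q v + f p y q v) /\
  (forall a x y p q v, f p q (a *: x + y) v = a * f p q x v + f p q y v) /\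
  (forall a x y p q r, f p q r (a *: x + y) = a * f p q r x + f p q r y) /\
  exists C : R, forall x y z v, `|f x y z v| <= C * `|x| * `|y| * `|z| * `|v|.

End Forms.

(* with J' = J1, J'' = J2, J''' = J3 (new direction = last argument);       *)
(* all remainders/continuity estimates are uniform in the operator norm.   *)
Definition C3_frechet {R : realType} {U : normedModType R} (J : U -> R)
  (J1 : U -> U -> R) (J2 : U -> U -> U -> R) (J3 : U -> U -> U -> U -> R) : Prop :=
  (forall w, blin1 (J1 w) /\ blin2 (J2 w) /\ blin3 (J3 w)) /\
  (forall w (e : R), 0 < e -> exists d : R, 0 < d /\ forall h : U, `|h| < d ->
     `|J (w + h) - J w - J1 w h| <= e * `|h|) /\
  (forall w (e : R), 0 < e -> exists d : R, 0 < d /\ forall h : U, `|h| < d ->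
     forall p, `|J1 (w + h) p - J1 w p - J2 w p h| <= e * `|h| * `|p|) /\
  (forall w (e : R), 0 < e -> exists d : R, 0 < d /\ forall h : U, `|h| < d ->
     forall p q, `|J2 (w + h) p q - J2 w p q - J3 w p q h|
                   <= e * `|h| * `|p| * `|q|) /\
  (forall w (e : R), 0 < e -> exists d : R, 0 < d /\ forall w' : U, `|w' - w| < d ->
     forall p q r, `|J3 w' p q r - J3 w p q r| <= e * `|p| * `|q| * `|r|).

(* A w v = A(w)(v), A1 w p v = A'(w)(p,v), A2 w p q v = A''(w)(p,q,v), ... *)
Definition C3_frechet_op {R : realType} {U V : normedModType R} (A : U -> V -> R)
  (A1 : U -> U -> V -> R) (A2 : U -> U -> U -> V -> R)
  (A3 : U -> U -> U -> U -> V -> R) : Prop :=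
  (forall w, blinV0 (A w) /\ blinV1 (A1 w) /\ blinV2 (A2 w) /\ blinV3 (A3 w)) /\
  (forall w (e : R), 0 < e -> exists d : R, 0 < d /\ forall h : U, `|h| < d ->
     forall v, `|A (w + h) v - A w v - A1 w h v| <= e * `|h| * `|v|) /\
  (forall w (e : R), 0 < e -> exists d : R, 0 < d /\ forall h : U, `|h| < d ->
     forall p v, `|A1 (w + h) p v - A1 w p v - A2 w p h v|
                   <= e * `|h| * `|p| * `|v|) /\
  (forall w (e : R), 0 < e -> exists d : R, 0 < d /\ forall h : U, `|h| < d ->
     forall p q v, `|A2 (w + h) p q v - A2 w p q v - A3 w p q h v|
                   <= e * `|h| * `|p| * `|q| * `|v|) /\
  (forall w (e : R), 0 < e -> exists d : R, 0 < d /\ forall w' : U, `|w' - w| < d ->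
     forall p q r v, `|A3 w' p q r v - A3 w p q r v|
                   <= e * `|p| * `|q| * `|r| * `|v|).

From HB Require Import structures.
From mathcomp Require Import all_boot all_order all_algebra.
From mathcomp Require Import all_classical all_reals all_analysis.
From mathcomp Require Import ring lra.
Import Order.TTheory GRing.Theory Num.Theory.
Import numFieldNormedType.Exports.
Local Open Scope classical_set_scope.
Local Open Scope ring_scope.

(* The estimator is exact for the discrete error, eta = J(u_h) - J(u~); the
   continuous solutions (u, z) enter only through the saturation assumption,
   which turns |J(u) - J(u~)| = |(J(u) - J(u_h)) + eta| into the two-sided
   bounds.  For exactness, consider the Lagrangian L(s) = J(w s) - A(w s)(z s)
   along w s = u~ + s e, z s = z~ + s e_s.  The trapezoidal rule with cubic
   remainder gives L(1) - L(0) = (L'(0) + L'(1))/2 + R^(3)(2); the Galerkin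
   equations give L(1) = J(u_h) and L'(1) = 0, while L(0) = J(u~) + rho(z~)
   and L'(0) = rho_s(e) + rho(e_s). *)

Lemma saturation_bounds (R : realFieldType) (x y b : R) :
  0 <= b < 1 -> `|y| <= b * `|x| ->
  (1 + b)^-1 * `|x - y| <= `|x| <= (1 - b)^-1 * `|x - y|.
Proof.
case/andP=> b_ge0 b_lt1 y_le; have xy_le := ler_normB x y.
have xy_ge := lerB_dist x y.
by apply/andP; split; rewrite mulrC ?ler_pdivrMr ?ler_pdivlMr; nra.
Qed.

Lemma fin_subspace_sub {R : realType} {X : normedModType R} {S : set X}
  {x y : X} : fin_subspace S -> S x -> S y -> S (x - y).
Proof.
move=> [s ->] [cx ->] [cy ->]; exists (fun i => cx i - cy i).
by rewrite -sumrB; apply: eq_bigr => i _; rewrite scalerBl.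
Qed.

Section LinearForm.
Context {R : pzRingType} {X : lmodType R}.

Definition linear_form (f : X -> R) : Prop :=
  forall a x y, f (a *: x + y) = a * f x + f y.

Context {f : X -> R} (f_lin : linear_form f).

Lemma linear_form0 : f 0 = 0.
Proof.
have := f_lin 1 0 0; rewrite scaler0 addr0 mul1r.
by move/(congr1 (fun t => t - f 0)); rewrite subrr addrK.
Qed.

Lemma linear_formD x y : f (x + y) = f x + f y.
Proof. by rewrite -[x]scale1r f_lin mul1r scale1r. Qed.

Lemma linear_formZ a x : f (a *: x) = a * f x.
Proof. by rewrite -[a *: x]addr0 f_lin linear_form0 addr0. Qed.

End LinearForm.

Section RealDerivatives.
Context {R : realType}.
Implicit Types (f g : R -> R) (x df dg : R).

Lemma is_derive_remainder f x df :
  (forall eps, 0 < eps -> exists d, 0 < d /\ forall h, `|h| < d ->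
     `|f (x + h) - f x - h * df| <= eps * `|h|) ->
  is_derive x 1 f df.
Proof.
move=> small.
have quotient_cvg :
    (fun h => h^-1 *: ((f \o shift x) (h *: 1) - f x)) @ 0^' --> df.
  apply/cvgrPdist_le => eps eps_gt0; have [d [d_gt0 Hd]] := small eps eps_gt0.
  exists d => // t /=; rewrite sub0r normrN => /Hd + t_neq0.
  rewrite /shift /= [t%:A]mulr1 [t + x]addrC -[t^-1 *: _]/(t^-1 * _).
  have -> : df - t^-1 * (f (x + t) - f x) = - t^-1 * (f (x + t) - f x - t * df).
    by field.
  by rewrite normrM normrN normfV ler_pdivrMl ?normr_gt0 // [`|t| * _]mulrC.
apply: DeriveDef; first by apply/cvg_ex; exists df.
exact: cvg_lim quotient_cvg.
Qed.

Lemma is_derive_add {f g x df dg} : is_derive x 1 f df -> is_derive x 1 g dg ->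
  is_derive x 1 (fun s => f s + g s) (df + dg).
Proof. exact: (@is_deriveD _ _ _ f g). Qed.

Lemma is_derive_sub {f g x df dg} : is_derive x 1 f df -> is_derive x 1 g dg ->
  is_derive x 1 (fun s => f s - g s) (df - dg).
Proof. exact: (@is_deriveB _ _ _ f g). Qed.

Lemma is_derive_mul {f g x df dg} : is_derive x 1 f df -> is_derive x 1 g dg ->
  is_derive x 1 (fun s => f s * g s) (df * g x + f x * dg).
Proof.
move=> df_f dg_g.
apply: is_derive_eq (@is_deriveM _ _ f g x 1 df dg df_f dg_g) _.
by rewrite -[f x *: dg]/(f x * dg) -[g x *: df]/(g x * df) addrC mulrC.
Qed.

Lemma is_derive_cvg {f x df} : is_derive x 1 f df -> f @ x --> f x.
Proof.
by case=> f_der _; apply: differentiable_continuous; apply/derivable1_diffP.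
Qed.

Lemma trapezoid_rule {f f1 f2 f3 : R -> R} {a b : R} : a < b ->
  (forall x, is_derive x 1 f (f1 x)) -> (forall x, is_derive x 1 f1 (f2 x)) ->
  (forall x, is_derive x 1 f2 (f3 x)) -> continuous f3 ->
  f b - f a = (b - a) / 2 * (f1 a + f1 b)
    + 2^-1 * \int[lebesgue_measure]_(s in `[a, b]) (f3 s * ((s - a) * (s - b))).
Proof.
move=> ab df1 df2 df3 f3_cont.
(* Integrating [f3 (t - a) (t - b)] twice by parts gives the antiderivative K. *)
pose K t := f2 t * ((t - a) * (t - b)) - f1 t * (2 * t - a - b) + 2 * f t.
have dK (t : R) : is_derive t 1 K (f3 t * ((t - a) * (t - b))).
  have dp (c : R) : is_derive t 1 (fun s => s - c) 1.
    apply: is_derive_eq (is_derive_sub (is_derive_id t 1)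
      (is_derive_cst c t 1)) _; exact: subr0.
  have dq : is_derive t 1 (fun s => 2 * s - a - b) 2.
    apply: is_derive_eq (is_derive_sub (is_derive_sub
      (is_derive_mul (is_derive_cst (2 : R) t 1) (is_derive_id t 1))
      (is_derive_cst a t 1)) (is_derive_cst b t 1)) _; ring.
  apply: is_derive_eq (is_derive_add (is_derive_sub
    (is_derive_mul (df3 t) (is_derive_mul (dp a) (dp b)))
    (is_derive_mul (df2 t) dq))
    (is_derive_mul (is_derive_cst (2 : R) t 1) (df1 t))) _.
  by rewrite /=; ring.
have K_LR : derivable_oo_LRcontinuous K a b.
  split; first by move=> x _; case: (dK x).
  - exact/cvg_at_right_filter/(is_derive_cvg (dK a)).
  - exact/cvg_at_left_filter/(is_derive_cvg (dK b)).
have integrand_cont :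
    {within `[a, b], continuous (fun s => f3 s * ((s - a) * (s - b)))}.
  apply: continuous_subspaceT => x; apply: cvgM; first exact: f3_cont.
  by apply: cvgM; apply: cvgB; (exact: cvg_id || exact: cvg_cst).
have K' x : (K^`())%classic x = f3 x * ((x - a) * (x - b)).
  by rewrite derive1E; case: (dK x).
have FTC := continuous_FTC2 ab integrand_cont K_LR (fun x _ => K' x).
by rewrite /Rintegral FTC /= /K; field.
Qed.

End RealDerivatives.

Section AffineArgument.
Context {R : realType} {V : lmodType R}.
Variables (F : R -> V -> R) (F_lin : forall r, linear_form (F r)) (v0 dv : V).

Lemma affine_argumentE :
  (fun r => F r (v0 + r *: dv)) = (fun r => F r v0 + r * F r dv).
Proof.
by apply/funext => r; rewrite (linear_formD (F_lin r)) (linear_formZ (F_lin r)).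
Qed.

Lemma is_derive_affine_argument (F' : R -> V -> R) s :
  linear_form (F' s) -> (forall v, is_derive s 1 (F^~ v) (F' s v)) ->
  is_derive s 1 (fun r => F r (v0 + r *: dv)) (F' s (v0 + s *: dv) + F s dv).
Proof.
move=> F'_lin dF; rewrite affine_argumentE.
apply: is_derive_eq
  (is_derive_add (dF v0) (is_derive_mul (is_derive_id s 1) (dF dv))) _.
by rewrite (linear_formD F'_lin) (linear_formZ F'_lin) /=; ring.
Qed.

Lemma continuous_affine_argument :
  (forall v, continuous (F^~ v)) -> continuous (fun r => F r (v0 + r *: dv)).
Proof.
move=> F_cont; rewrite affine_argumentE => r.
by apply: cvgD; [exact: F_cont | apply: cvgM; [exact: cvg_id | exact: F_cont]].
Qed.

End AffineArgument.

Section Line.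
Context {R : realType} {U : normedModType R}.
Variables (w0 e : U).

(* [K] collects the norms of the arguments held fixed, e.g. [`|e| * `|v|] when
   differentiating [A1 _ e v]. *)
Lemma is_derive_line (F : U -> R) (DF : U -> U -> R) (K : R) : 0 <= K ->
  (forall w, linear_form (DF w)) ->
  (forall w eps, 0 < eps -> exists d, 0 < d /\ forall h, `|h| < d ->
     `|F (w + h) - F w - DF w h| <= eps * `|h| * K) ->
  forall s : R, is_derive s 1 (fun s => F (w0 + s *: e)) (DF (w0 + s *: e) e).
Proof.
move=> K_ge0 DF_lin small s; apply: is_derive_remainder => eps eps_gt0.
set w := w0 + s *: e; have e_ge0 := normr_ge0 e.
have C_gt0 : 0 < (`|e| + 1) * (K + 1) by apply: mulr_gt0; lra.
have [d [d_gt0 Hd]] := small w _ (divr_gt0 eps_gt0 C_gt0).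
exists (d / (`|e| + 1)); split => [|h]; first by apply: divr_gt0; lra.
rewrite ltr_pdivlMr; last by lra.
move=> hd; have he_lt : `|h *: e| < d.
  by rewrite normrZ; apply: le_lt_trans hd; apply: ler_wpM2l => //; lra.
have -> : w0 + (s + h) *: e = w + h *: e by rewrite scalerDl addrA.
move: (Hd _ he_lt); rewrite (linear_formZ (DF_lin w)) normrZ.
move=> /le_trans; apply.
set c := eps / _; have c_ge0 : 0 <= c by apply: divr_ge0; lra.
have <- : c * ((`|e| + 1) * (K + 1)) = eps by rewrite mulfVK ?gt_eqF.
clearbody c; have h_ge0 := normr_ge0 h.
have : 0 <= c * `|h| by apply: mulr_ge0.
have : 0 <= c * `|h| * `|e| by do ?apply: mulr_ge0.
have : 0 <= c * `|h| * K by do ?apply: mulr_ge0.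
nra.
Qed.

Lemma continuous_line (F : U -> R) (K : R) : 0 <= K ->
  (forall w eps, 0 < eps -> exists d, 0 < d /\ forall w', `|w' - w| < d ->
     `|F w' - F w| <= eps * K) ->
  continuous (fun s : R => F (w0 + s *: e)).
Proof.
move=> K_ge0 small s; apply/cvgrPdist_le => eps eps_gt0.
have e_ge0 := normr_ge0 e; have K1_gt0 : 0 < K + 1 by lra.
have [d [d_gt0 Hd]] := small (w0 + s *: e) _ (divr_gt0 eps_gt0 K1_gt0).
exists (d / (`|e| + 1)); first by apply: divr_gt0 => //; lra.
move=> t /=; rewrite ltr_pdivlMr; last by lra.
move=> hd; rewrite distrC; apply: le_trans (Hd (w0 + t *: e) _) _.
  rewrite opprD addrACA subrr add0r -scalerBl normrZ distrC.
  by apply: le_lt_trans hd; apply: ler_wpM2l => //; lra.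
by rewrite mulrAC ler_pdivrMr //; nra.
Qed.

End Line.

Section Lagrangian.
Context {R : realType} {U V : normedModType R}.
Context {A : U -> V -> R} {A1 : U -> U -> V -> R} {A2 : U -> U -> U -> V -> R}
  {A3 : U -> U -> U -> U -> V -> R}.
Context {J : U -> R} {J1 : U -> U -> R} {J2 : U -> U -> U -> R}
  {J3 : U -> U -> U -> U -> R}.
Hypotheses (hA : C3_frechet_op A A1 A2 A3) (hJ : C3_frechet J J1 J2 J3).
Variables (ut e : U) (zt es : V).

Local Notation w s := (ut + s *: e).
Local Notation z s := (zt + s *: es).

Lemma is_derive_J_line (s : R) :
  is_derive s 1 (fun s => J (w s)) (J1 (w s) e).
Proof.
case: hJ => J_lin [dJ _]; apply: (@is_derive_line _ _ ut e J J1 1) => //.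
  exact: (fun x => (J_lin x).1.1).
move=> x eps /(dJ x) [d [d_gt0 Hd]]; exists d; split => // h /Hd.
by rewrite mulr1.
Qed.

Lemma is_derive_J1_line (s : R) :
  is_derive s 1 (fun s => J1 (w s) e) (J2 (w s) e e).
Proof.
case: hJ => J_lin [_ [dJ1 _]].
apply: (@is_derive_line _ _ ut e (J1^~ e) (J2^~ e) `|e|) => //.
  exact: (fun p a x y => (J_lin p).2.1.2.1 a x y e).
by move=> x eps /(dJ1 x) [d [d_gt0 Hd]]; exists d; split => // h /Hd.
Qed.

Lemma is_derive_J2_line (s : R) :
  is_derive s 1 (fun s => J2 (w s) e e) (J3 (w s) e e e).
Proof.
case: hJ => J_lin [_ [_ [dJ2 _]]].
apply: (@is_derive_line _ _ ut e (fun x => J2 x e e) (fun x => J3 x e e)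
  (`|e| * `|e|)); first exact: mulr_ge0.
  exact: (fun p a x y => (J_lin p).2.2.2.2.1 a x y e e).
move=> x eps /(dJ2 x) [d [d_gt0 Hd]]; exists d; split => // h /Hd.
by move=> /(_ e e); rewrite mulrA.
Qed.

Lemma continuous_J3_line : continuous (fun s : R => J3 (w s) e e e).
Proof.
case: hJ => _ [_ [_ [_ cJ3]]].
apply: (@continuous_line _ _ ut e (fun x => J3 x e e e) (`|e| * `|e| * `|e|)).
  by do ?apply: mulr_ge0.
move=> x eps /(cJ3 x) [d [d_gt0 Hd]]; exists d; split => // w' /Hd.
by move=> /(_ e e e); rewrite !mulrA.
Qed.

Lemma is_derive_A_line (v : V) (s : R) :
  is_derive s 1 (fun s => A (w s) v) (A1 (w s) e v).
Proof.
case: hA => A_lin [dA _].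
apply: (@is_derive_line _ _ ut e (A^~ v) (fun x h => A1 x h v) `|v|) => //.
  exact: (fun p a x y => (A_lin p).2.1.1 a x y v).
by move=> x eps /(dA x) [d [d_gt0 Hd]]; exists d; split => // h /Hd.
Qed.

Lemma is_derive_A1_line (v : V) (s : R) :
  is_derive s 1 (fun s => A1 (w s) e v) (A2 (w s) e e v).
Proof.
case: hA => A_lin [_ [dA1 _]].
apply: (@is_derive_line _ _ ut e (fun x => A1 x e v) (fun x h => A2 x e h v)
  (`|e| * `|v|)); first exact: mulr_ge0.
  exact: (fun p a x y => (A_lin p).2.2.1.2.1 a x y e v).
move=> x eps /(dA1 x) [d [d_gt0 Hd]]; exists d; split => // h /Hd.
by move=> /(_ e v); rewrite mulrA.
Qed.

Lemma is_derive_A2_line (v : V) (s : R) :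
  is_derive s 1 (fun s => A2 (w s) e e v) (A3 (w s) e e e v).
Proof.
case: hA => A_lin [_ [_ [dA2 _]]].
apply: (@is_derive_line _ _ ut e (fun x => A2 x e e v) (fun x h => A3 x e e h v)
  (`|e| * `|e| * `|v|)); first by do ?apply: mulr_ge0.
  exact: (fun p a x y => (A_lin p).2.2.2.2.2.1 a x y e e v).
move=> x eps /(dA2 x) [d [d_gt0 Hd]]; exists d; split => // h /Hd.
by move=> /(_ e e v); rewrite !mulrA.
Qed.

Lemma continuous_A3_line (v : V) : continuous (fun s : R => A3 (w s) e e e v).
Proof.
case: hA => _ [_ [_ [_ cA3]]].
apply: (@continuous_line _ _ ut e (fun x => A3 x e e e v)
  (`|e| * `|e| * `|e| * `|v|)); first by do ?apply: mulr_ge0.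
move=> x eps /(cA3 x) [d [d_gt0 Hd]]; exists d; split => // w' /Hd.
by move=> /(_ e e e v); rewrite !mulrA.
Qed.

Lemma linear_form_A (x : U) : linear_form (A x).
Proof. by case: hA => /(_ x) [[lin _] _] _. Qed.

Lemma linear_form_A1 (x p : U) : linear_form (A1 x p).
Proof. by case: hA => /(_ x) [_ [[_ [lin _]] _]] _ a v1 v2; apply: lin. Qed.

Lemma linear_form_A2 (x p q : U) : linear_form (A2 x p q).
Proof. by case: hA => /(_ x) [_ [_ [[_ [_ [lin _]]] _]]] _ a v1 v2; apply: lin. Qed.

Lemma linear_form_A3 (x p q r : U) : linear_form (A3 x p q r).
Proof.
by case: hA => /(_ x) [_ [_ [_ [_ [_ [_ [lin _]]]]]]] _ a v1 v2; apply: lin.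
Qed.

Definition lagr (s : R) := J (w s) - A (w s) (z s).
Definition lagr' (s : R) := J1 (w s) e - A1 (w s) e (z s) - A (w s) es.
Definition lagr'' (s : R) :=
  J2 (w s) e e - A2 (w s) e e (z s) - 2 * A1 (w s) e es.
Definition lagr''' (s : R) :=
  J3 (w s) e e e - A3 (w s) e e e (z s) - 3 * A2 (w s) e e es.

Lemma is_derive_lagr (s : R) : is_derive s 1 lagr (lagr' s).
Proof.
apply: is_derive_eq (is_derive_sub (is_derive_J_line s)
  (is_derive_affine_argument (fun r => A (w r)) (fun r => linear_form_A _) zt es
     (fun r => A1 (w r) e) s (linear_form_A1 _ _) (is_derive_A_line^~ s))) _.
by rewrite /lagr' opprD addrA.
Qed.

Lemma is_derive_lagr' (s : R) : is_derive s 1 lagr' (lagr'' s).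
Proof.
apply: is_derive_eq (is_derive_sub (is_derive_sub (is_derive_J1_line s)
  (is_derive_affine_argument (fun r => A1 (w r) e) (fun r => linear_form_A1 _ _)
     zt es (fun r => A2 (w r) e e) s (linear_form_A2 _ _ _)
     (is_derive_A1_line^~ s)))
  (is_derive_A_line es s)) _.
by rewrite /lagr''; ring.
Qed.

Lemma is_derive_lagr'' (s : R) : is_derive s 1 lagr'' (lagr''' s).
Proof.
apply: is_derive_eq (is_derive_sub (is_derive_sub (is_derive_J2_line s)
  (is_derive_affine_argument (fun r => A2 (w r) e e)
     (fun r => linear_form_A2 _ _ _) zt es (fun r => A3 (w r) e e e) s
     (linear_form_A3 _ _ _ _) (is_derive_A2_line^~ s)))
  (is_derive_mul (is_derive_cst (2 : R) s 1) (is_derive_A1_line es s))) _.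
by rewrite /lagr'''; ring.
Qed.

Lemma continuous_lagr''' : continuous lagr'''.
Proof.
move=> s; apply: cvgB; first apply: cvgB.
- exact: continuous_J3_line.
- exact: (continuous_affine_argument (fun r => A3 (w r) e e e)
    (fun r => linear_form_A3 _ _ _ _) zt es continuous_A3_line s).
- exact: cvgM (cvg_cst _) (is_derive_cvg (is_derive_A2_line es s)).
Qed.

Lemma lagr_trapezoid : lagr 1 - lagr 0 = 2^-1 * (lagr' 0 + lagr' 1)
  + 2^-1 * \int[lebesgue_measure]_(s in `[0, 1]) (lagr''' s * (s * (s - 1))).
Proof.
rewrite (trapezoid_rule ltr01 is_derive_lagr is_derive_lagr' is_derive_lagr''
  continuous_lagr''') subr0 mul1r.
by under eq_Rintegral do rewrite subr0.
Qed.

End Lagrangian.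

Theorem mainTheorem1 (R : realType) (U V : completeNormedModType R)
  (A : U -> V -> R) (A1 : U -> U -> V -> R) (A2 : U -> U -> U -> V -> R)
  (A3 : U -> U -> U -> U -> V -> R)
  (J : U -> R) (J1 : U -> U -> R) (J2 : U -> U -> U -> R)
  (J3 : U -> U -> U -> U -> R)
  (u : U) (z : V) (Uh : set U) (Vh : set V) (uh : U) (zh : V) (ut : U) (zt : V)
  (b0 bh : R) :
  C3_frechet_op A A1 A2 A3 ->
  C3_frechet J J1 J2 J3 ->
  (forall v, A u v = 0) ->
  (forall p, A1 u p z = J1 u p) ->
  fin_subspace Uh -> fin_subspace Vh ->
  Uh uh -> (forall v, Vh v -> A uh v = 0) ->
  Vh zh -> (forall p, Uh p -> A1 uh p zh = J1 uh p) ->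
  Uh ut -> Vh zt ->
  0 < b0 < 1 -> bh < b0 ->
  `|J u - J uh| < bh * `|J u - J ut| ->
  let rho := fun v : V => - A ut v in
  let rhos := fun p : U => J1 ut p - A1 ut p zt in
  let e := uh - ut in
  let es := zh - zt in
  let Rem := 2^-1 * \int[@lebesgue_measure R]_(s in `[0, 1])
      ((J3 (ut + s *: e) e e e - A3 (ut + s *: e) e e e (zt + s *: es)
        - 3 * A2 (ut + s *: e) e e es) * (s * (s - 1))) in
  let eta := 2^-1 * rho (zh - zt) + 2^-1 * rhos (uh - ut) + rho zt + Rem in
  ((1 + bh)^-1 * `|eta| <= `|J u - J ut| <= (1 - bh)^-1 * `|eta|) /\
  ((1 + b0)^-1 * `|eta| <= `|J u - J ut| <= (1 - b0)^-1 * `|eta|).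
Proof.
move=> hA hJ _ _ hUh hVh Uuh Auh Vzh A1uh Uut Vzt /andP[b0_gt0 b0_lt1].
move=> bh_lt_b0 sat rho rhos e es Rem eta.
have Ue : Uh e := fin_subspace_sub hUh Uuh Uut.
have Ves : Vh es := fin_subspace_sub hVh Vzh Vzt.
have eta_err : eta = J uh - J ut.
  have := lagr_trapezoid hA hJ ut e zt es; set I := Rintegral _ _ _.
  have Rem_I : Rem = 2^-1 * I by [].
  have w1 : ut + 1 *: e = uh by rewrite scale1r subrKC.
  have z1 : zt + 1 *: es = zh by rewrite scale1r subrKC.
  rewrite /lagr /lagr' !scale0r !addr0 w1 z1.
  rewrite (Auh _ Vzh) (Auh _ Ves) (A1uh _ Ue).
  by rewrite /eta Rem_I /rho /rhos -/e -/es; lra.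
have -> : eta = (J u - J ut) - (J u - J uh) by rewrite eta_err; ring.
have bh_gt0 : 0 < bh.
  by have := le_lt_trans (normr_ge0 _) sat; have := normr_ge0 (J u - J ut); nra.
split; apply: saturation_bounds.
- by apply/andP; split; lra.
- exact: ltW.
- by apply/andP; split; lra.
- exact: le_trans (ltW sat) (ler_wpM2r (normr_ge0 _) (ltW bh_lt_b0)).
Qed.
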